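(* Let $V$ be a separable Banach space, $\alpha>1/2$, $\beta\in(0,1)$ with $\alpha(1+\beta)>1$, $A\in C^\alpha_tC^\beta_V$, $x_0\in V$, and let $x\in C^\alpha_tV$ be a solution to $x_t=x_0+\int_0^tA(\mathrm{d} s,x_s)$, $t\in[0,T]$. Then there exists $C=C(\alpha,\beta,T)$ such that \[ \llbracket x\rrbracket_\alpha\le C(1+\|A\|^2_{\alpha,\beta}),\qquad\|x\|_\alpha\le C(1+\|x_0\|_V+\|A\|^2_{\alpha,\beta}). \]
   Context: Fix $T>0$. For a path $f:[0,T]\to V$, $f_{s,t}=f_t-f_s$, $\llbracket f\rrbracket_\alpha=\sup_{s<t}\|f_{s,t}\|_V/|t-s|^\alpha$, $\|f\|_\alpha=\sup_t\|f_t\|_V+\llbracket f\rrbracket_\alpha$, $C^\alpha_tV$ the paths with finite $\|\cdot\|_\alpha$ (here $\alpha<1$). For $g:V\to V$, $\|g\|_\beta=\sup_{x\ne y}\|g(x)-g(y)\|_V/\|x-y\|_V^\beta+\sup_x\|g(x)\|_V$. A field $A:[0,T]\times V\to V$ with $A(0,\cdot)=0$, $A_{s,t}(x)=A(t,x)-A(s,x)$, is in $C^\alpha_tC^\beta_V$ if $\|A\|_{\alpha,\beta}=\sup_{s<t}\|A_{s,t}\|_\beta/|t-s|^\alpha<\infty$. For $x\in C^\alpha_tV$ with $\alpha(1+\beta)>1$, $\int_s^tA(\mathrm{d} r,x_r)=\lim_{|\Pi|\to0}\sum_iA_{t_i,t_{i+1}}(x_{t_i})$ over partitions of $[s,t]$.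 *)

From HB Require Import structures.
From mathcomp Require Import all_boot all_order all_algebra.
From mathcomp Require Import all_classical all_reals all_analysis.
Set Implicit Arguments. Unset Strict Implicit. Unset Printing Implicit Defensive.
Import Order.TTheory GRing.Theory Num.Theory.
Import numFieldNormedType.Exports.
Local Open Scope classical_set_scope.
Local Open Scope ring_scope.

Section Defs.
Variable R : realType.

Definition separable (V : normedModType R) : Prop :=
  exists D : set V, countable D /\ closure D = setT.

Definition hoelder_semi (V : normedModType R) (alpha T : R) (f : R -> V) : \bar R :=
  ereal_sup [set r : \bar R | exists s t : R,
     [/\ 0 <= s, s < t, t <= T &
         r = (`|f t - f s| / (t - s) `^ alpha)%:E]].

Definition sup_norm (V : normedModType R) (T : R) (f : R -> V) : \bar R :=
  ereal_sup [set r : \bar R | exists t : R, [/\ 0 <= t, t <= T & r = (`|f t|)%:E]].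

Definition hoelder_norm (V : normedModType R) (alpha T : R) (f : R -> V) : \bar R :=
  (sup_norm T f + hoelder_semi alpha T f)%E.

Definition fnorm_beta (V : normedModType R) (beta : R) (g : V -> V) : \bar R :=
  (ereal_sup [set r : \bar R | exists x y : V,
      x != y /\ r = (`|g x - g y| / `|x - y| `^ beta)%:E]
   + ereal_sup [set r : \bar R | exists x : V, r = (`|g x|)%:E])%E.

Definition incr (V : normedModType R) (A : R -> V -> V) (s t : R) : V -> V :=
  fun v => A t v - A s v.

Definition field_norm (V : normedModType R) (alpha beta T : R)
    (A : R -> V -> V) : \bar R :=
  ereal_sup [set r : \bar R | exists s t : R,
     [/\ 0 <= s, s < t, t <= T &
         r = (fnorm_beta beta (incr A s t) * (((t - s) `^ alpha)^-1)%:E)%E]].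

(* pts = [:: t_1; ...; t_n] with s = t_0 < t_1 < ... < t_n = t *)
Definition is_partition (s t : R) (pts : seq R) : Prop :=
  sorted <%R (s :: pts) /\ last s pts = t.

Definition mesh (s : R) (pts : seq R) : R :=
  \big[Num.max/0]_(ab <- zip (s :: pts) pts) (ab.2 - ab.1).

Definition riemann_sum (V : normedModType R) (A : R -> V -> V) (x : R -> V)
    (s : R) (pts : seq R) : V :=
  \sum_(ab <- zip (s :: pts) pts) incr A ab.1 ab.2 (x ab.1).

Definition young_integral_is (V : normedModType R) (A : R -> V -> V)
    (x : R -> V) (s t : R) (I : V) : Prop :=
  forall e : R, 0 < e -> exists d : R, 0 < d /\
    forall pts : seq R, is_partition s t pts -> mesh s pts < d ->
      `|riemann_sum A x s pts - I| < e.

End Defs.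

From HB Require Import structures.
From mathcomp Require Import all_boot all_order all_algebra.
From mathcomp Require Import all_classical all_reals all_analysis.
From mathcomp Require Import ring lra.
Import Order.TTheory GRing.Theory Num.Theory.
Import numFieldNormedType.Exports.
Local Open Scope classical_set_scope.
Local Open Scope ring_scope.
Set Implicit Arguments. Unset Strict Implicit. Unset Printing Implicit Defensive.

(* Suppose x is K-Hoelder on all intervals of length at most h. Along the
   dyadic refinements of [s, t] the Riemann sums of the Young integral change
   by midpoint defects A_{p,q}(x_p) + A_{q,r}(x_q) - A_{p,r}(x_p) of size
   a (1 + K) (q - p)^theta with theta = alpha (1 + beta) > 1, so they sum to the
   sewing bound |x_t - x_s - A_{s,t}(x_s)| <= c a (1 + K) (t - s)^theta, where
   c = (1 - 2^(1 - theta))^-1 comes from the geometric series of the defects.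
   Hence x is (a + (1 + K) / 2)-Hoelder at scale h once c a h^(alpha beta) <= 1/2,
   and iterating from the a priori finite constant yields the constant 2 a + 1.
   Chaining about T / h such intervals costs a factor (T / h)^(1 - alpha); for
   h ~ a^(-1 / (alpha beta)) this is O(1 + a) because 1 - alpha <= alpha beta,
   whence [[x]]_alpha = O(1 + a^2). *)

Section ElementaryBounds.
Variable R : realType.

Lemma exists_div_exp2_lt (c d : R) : 0 < d -> exists n, c / (2 ^ n)%:R < d.
Proof.
move=> d0; exists (Num.truncn (c / d)).+1.
rewrite ltr_pdivrMr ?ltr0n ?expn_gt0 // mulrC -ltr_pdivrMr //.
by apply: lt_le_trans (truncnS_gt _) _; rewrite ler_nat ltnW // ltn_expl.
Qed.

Lemma le_add_div_exp2 (y z c : R) : (forall n, y <= z + c / (2 ^ n)%:R) -> y <= z.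
Proof.
move=> H; apply/ler_addgt0Pr => e e0.
have [n cn] := exists_div_exp2_lt c e0.
by apply: le_trans (H n) _; rewrite lerD2l (ltW cn).
Qed.

Lemma sumr_nat_pairs (W : zmodType) (F : nat -> W) m :
  \sum_(0 <= j < 2 * m) F j = \sum_(0 <= i < m) (F (2 * i)%N + F (2 * i).+1).
Proof.
elim: m => [|m IH]; first by rewrite muln0 !big_geq.
by rewrite mulnS !big_nat_recr //= IH addrA.
Qed.

Lemma pow2_gt2 (theta : R) : 1 < theta -> 2 < 2 `^ theta.
Proof.
move=> theta1; rewrite /powR pnatr_eq0 /= -{1}(@lnK R 2) ?posrE // ltr_expR.
by rewrite ltr_pMl // ln_gt0 // ltr1n.
Qed.

Lemma powR_le_add1 (K b : R) : 0 <= K -> 0 <= b -> b <= 1 -> K `^ b <= 1 + K.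
Proof.
move=> K0 b0 b1; have [K1|K1] := lerP K 1.
  apply: le_trans (ge0_ler_powR b0 _ _ K1) _; rewrite ?nnegrE //.
  by rewrite powR1 lerDl.
by apply: (@le_trans _ _ K); [rewrite ler1_powR // (ltW K1) | rewrite lerDr].
Qed.

Lemma powRV (y r : R) : 0 <= y -> (y^-1) `^ r = (y `^ r)^-1.
Proof. by move=> y0; rewrite -powR_inv1 // -powRrM mulN1r powRN. Qed.

Lemma powR_exprn (y r : R) n : 0 <= y -> (y ^+ n) `^ r = (y `^ r) ^+ n.
Proof.
by move=> y0; rewrite -powR_mulrn // -powRrM mulrC powRrM powR_mulrn ?powR_ge0.
Qed.

Lemma dyadic_powR (w theta : R) k : 0 <= w ->
  (2 ^ k)%:R * (w / (2 ^ k.+1)%:R) `^ theta =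
  (w / 2) `^ theta * (2 / 2 `^ theta) ^+ k.
Proof.
move=> w0; rewrite expnS natrM invfM mulrA powRM ?divr_ge0 ?invr_ge0 //.
rewrite powRV ?ler0n // natrX powR_exprn // exprMn exprVn; ring.
Qed.

Lemma mul_powR_div (N w alpha : R) : 0 < N -> 0 <= w ->
  N * (w / N) `^ alpha = N `^ (1 - alpha) * w `^ alpha.
Proof.
move=> N0 w0; rewrite powRM ?invr_ge0 ?(ltW N0) // powRV ?(ltW N0) //.
rewrite powRB ?(gt_eqF N0) ?implybT // powRr1 ?(ltW N0) //; ring.
Qed.

Definition sewing_const (theta : R) := (1 - 2 / 2 `^ theta)^-1.

Lemma sewing_const_gt0 (theta : R) : 1 < theta -> 0 < sewing_const theta.
Proof.
move=> theta1; have p2 : 0 < 2 `^ theta by rewrite powR_gt0.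
by rewrite invr_gt0 subr_gt0 ltr_pdivrMr // mul1r pow2_gt2.
Qed.

End ElementaryBounds.

Section HoelderSeminorm.
Variables (R : realType) (V : normedModType R).
Implicit Types (x : R -> V) (alpha T h K : R).

Definition local_hoelder alpha T h K x := forall s t,
  0 <= s -> s < t -> t <= T -> t - s <= h -> `|x t - x s| <= K * (t - s) `^ alpha.

Lemma local_hoelder_le alpha T h h' K K' x : h' <= h -> K <= K' ->
  local_hoelder alpha T h K x -> local_hoelder alpha T h' K' x.
Proof.
move=> h'h KK' Hx s t s0 st tT th'; apply: le_trans (Hx _ _ s0 st tT _) _.
  exact: le_trans h'h.
by rewrite ler_wpM2r ?powR_ge0.
Qed.

Lemma local_hoelderT alpha T K x :
  local_hoelder alpha T T K x <->
  forall s t, 0 <= s -> s < t -> t <= T -> `|x t - x s| <= K * (t - s) `^ alpha.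
Proof. by split=> Hx s t s0 st tT => [|_]; apply: Hx => //; lra. Qed.

Lemma hoelder_semi_le alpha T K x :
  local_hoelder alpha T T K x -> (hoelder_semi alpha T x <= K%:E)%E.
Proof.
move/local_hoelderT=> Hx; apply: ge_ereal_sup => _ [s [t [s0 st tT ->]]].
by rewrite lee_fin ler_pdivrMr ?powR_gt0 ?subr_gt0 //; apply: Hx.
Qed.

Lemma sup_norm_le T K x :
  (forall t, 0 <= t -> t <= T -> `|x t| <= K) -> (sup_norm T x <= K%:E)%E.
Proof. by move=> Hx; apply: ge_ereal_sup => _ [t [t0 tT ->]]; rewrite lee_fin Hx. Qed.

Lemma norm_le_local_hoelder alpha T K x : 0 <= K -> 0 < alpha ->
  local_hoelder alpha T T K x ->
  forall t, 0 <= t -> t <= T -> `|x t| <= `|x 0| + K * T `^ alpha.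
Proof.
move=> K0 alpha0 /local_hoelderT xK t; rewrite le_eqVlt => /orP[/eqP <- | t0] tT.
  by rewrite lerDl mulr_ge0 ?powR_ge0.
have -> : x t = x 0 + (x t - x 0) by rewrite addrC subrK.
apply: le_trans (ler_normD _ _) _; rewrite lerD2l.
apply: le_trans (xK _ _ (lexx 0) t0 tT) _; rewrite subr0 ler_wpM2l //.
by apply: ge0_ler_powR; rewrite ?nnegrE ?(ltW alpha0) ?(ltW t0) ?(le_trans (ltW t0) tT).
Qed.

Lemma hoelder_norm_fin_local_hoelder alpha T x : 0 < T ->
  (hoelder_norm alpha T x < +oo)%E ->
  exists2 M, 0 <= M & local_hoelder alpha T T M x.
Proof.
move=> T0; rewrite /hoelder_norm.
have sup_gt : (`|x 0|%:E <= sup_norm T x)%E.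
  by apply: ereal_sup_ubound; exists 0; split => //; apply: ltW.
have semi_gt : ((`|x T - x 0| / (T - 0) `^ alpha)%:E <= hoelder_semi alpha T x)%E.
  by apply: ereal_sup_ubound; exists 0, T.
move: sup_gt semi_gt; case: (sup_norm T x) => [r| |];
  case E: (hoelder_semi alpha T x) => [M| |] // _; rewrite lee_fin => M0 _.
exists M; first by apply: le_trans M0; rewrite divr_ge0 ?powR_ge0.
apply/local_hoelderT => s t s0 st tT.
rewrite -ler_pdivrMr ?powR_gt0 ?subr_gt0 // -lee_fin -E.
by apply: ereal_sup_ubound; exists s, t.
Qed.

End HoelderSeminorm.

Section FieldNorm.
Variables (R : realType) (V : normedModType R).
Variables (alpha beta T a : R) (A : R -> V -> V).
Hypothesis Ha : field_norm alpha beta T A = a%:E.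

Lemma field_norm_nontrivial : exists w : V, w != 0.
Proof.
case: (pselect (exists w : V, w != 0)) => // novec.
have V0 (v : V) : v = 0 by apply/eqP/negPn/negP => v0; apply: novec; exists v.
suff : (field_norm alpha beta T A <= -oo)%E by rewrite Ha.
apply: ge_ereal_sup => _ [s [t [_ st _ ->]]]; rewrite /fnorm_beta.
have -> : [set r | exists v y : V, v != y /\
    r = (`|incr A s t v - incr A s t y| / `|v - y| `^ beta)%:E] = set0.
  by apply/seteqP; split => // r [v [y []]]; rewrite (V0 v) (V0 y) eqxx.
by rewrite ereal_sup0 addNye gt0_mulNye // lte_fin invr_gt0 powR_gt0 // subr_gt0.
Qed.

Section Interval.
Variables (s t : R).
Hypotheses (s0 : 0 <= s) (st : s < t) (tT : t <= T).

Lemma field_norm_incr_le v y z : v != y ->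
  `|incr A s t v - incr A s t y| / `|v - y| `^ beta + `|incr A s t z|
    <= a * (t - s) `^ alpha.
Proof.
move=> vy; have ts0 : 0 < (t - s) `^ alpha by rewrite powR_gt0 // subr_gt0.
rewrite -ler_pdivrMr // -lee_fin EFinM EFinD -Ha.
apply: le_trans (ereal_sup_ubound _) => /=; last by exists s, t.
apply: lee_wpmul2r; first by rewrite lee_fin invr_ge0 (ltW ts0).
by apply: leeD; apply: ereal_sup_ubound; [exists v, y | exists z].
Qed.

Lemma incr_norm_le z : `|incr A s t z| <= a * (t - s) `^ alpha.
Proof.
have [w w0] := field_norm_nontrivial.
have zw : z + w != z by rewrite -subr_eq0 addrAC subrr add0r.
apply: le_trans (field_norm_incr_le z zw); rewrite lerDr.
by rewrite divr_ge0 ?powR_ge0.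
Qed.

End Interval.

Lemma field_norm_ge0 : 0 < T -> 0 <= a.
Proof.
move=> T0; have := le_trans (normr_ge0 _) (incr_norm_le (lexx 0) T0 (lexx T) 0).
by rewrite pmulr_lge0 // powR_gt0 // subr0.
Qed.

Lemma incr_hoelder s t : 0 <= s -> s < t -> t <= T -> forall v y,
  `|incr A s t v - incr A s t y| <= a * (t - s) `^ alpha * `|v - y| `^ beta.
Proof.
move=> s0 st tT v y; have a0 := field_norm_ge0 (le_lt_trans s0 (lt_le_trans st tT)).
have [->|vy] := eqVneq v y; first by rewrite !subrr normr0 !mulr_ge0 ?powR_ge0.
rewrite -ler_pdivrMr ?powR_gt0 ?normr_gt0 ?subr_eq0 //.
by apply: le_trans (field_norm_incr_le s0 st tT 0 vy); rewrite lerDl.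
Qed.

End FieldNorm.

Section Partitions.
Variables (R : realType) (V : normedModType R).
Implicit Types (s t u d : R) (p : seq R).

Lemma zip_cons_cat (T : Type) (s : T) (p1 p2 : seq T) :
  zip (s :: p1 ++ p2) (p1 ++ p2) = zip (s :: p1) p1 ++ zip (last s p1 :: p2) p2.
Proof. by elim: p1 s => [|u p1 IH] s //=; rewrite IH. Qed.

Lemma is_partition_cat s u t p1 p2 :
  is_partition s u p1 -> is_partition u t p2 -> is_partition s t (p1 ++ p2).
Proof.
move=> [sorted1 last1] [sorted2 last2]; split; last by rewrite last_cat last1.
by move: sorted1 sorted2; rewrite /= cat_path last1 => -> ->.
Qed.

Lemma riemann_sum_cat (A : R -> V -> V) (x : R -> V) s p1 p2 :
  riemann_sum A x s (p1 ++ p2) =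
  riemann_sum A x s p1 + riemann_sum A x (last s p1) p2.
Proof. by rewrite /riemann_sum zip_cons_cat big_cat. Qed.

Lemma mesh_ltP s p d : 0 < d ->
  mesh s p < d <-> forall ab, ab \in zip (s :: p) p -> ab.2 - ab.1 < d.
Proof.
move=> d0; split=> [mesh_d ab ab_in | Hd].
  apply: le_lt_trans mesh_d; rewrite /mesh.
  exact: (le_bigmax_seq 0 ab xpredT (fun ab => ab.2 - ab.1) ab_in).
by rewrite /mesh big_seq; apply: bigmax_lt.
Qed.

Lemma mesh_cat_lt s p1 p2 d : 0 < d ->
  mesh s p1 < d -> mesh (last s p1) p2 < d -> mesh s (p1 ++ p2) < d.
Proof.
move=> d0 /(mesh_ltP _ _ d0) H1 /(mesh_ltP _ _ d0) H2.
by apply/mesh_ltP => // ab; rewrite zip_cons_cat mem_cat => /orP[/H1|/H2].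
Qed.

Definition grid s t (N i : nat) : R := s + (t - s) * (i%:R / N%:R).

Definition grid_partition s t N := map (grid s t N) (iota 1 N).

Lemma grid0 s t N : grid s t N 0 = s.
Proof. by rewrite /grid mul0r mulr0 addr0. Qed.

Lemma grid_last s t N : (0 < N)%N -> grid s t N N = t.
Proof. by move=> N0; rewrite /grid divff ?pnatr_eq0 -?lt0n // mulr1 addrC subrK. Qed.

Lemma grid_step s t N i : grid s t N i.+1 - grid s t N i = (t - s) / N%:R.
Proof. by rewrite /grid -addn1 natrD; ring. Qed.

Lemma grid_double s t N i : (0 < N)%N -> grid s t (2 * N) (2 * i) = grid s t N i.
Proof. by move=> N0; rewrite /grid !natrM -mulf_div divff ?mul1r. Qed.

Lemma grid_ge s t N i : s <= t -> s <= grid s t N i.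
Proof. by move=> st; rewrite /grid lerDl mulr_ge0 ?divr_ge0 ?subr_ge0. Qed.

Lemma grid_le s t N i : s <= t -> (0 < N)%N -> (i <= N)%N -> grid s t N i <= t.
Proof.
move=> st N0 iN; rewrite /grid -lerBrDl ler_piMr ?subr_ge0 //.
by rewrite ler_pdivrMr ?ltr0n // mul1r ler_nat.
Qed.

Lemma zip_map_iota (T : Type) (f : nat -> T) m n :
  zip (f m :: map f (iota m.+1 n)) (map f (iota m.+1 n)) =
  map (fun i => (f i, f i.+1)) (iota m n).
Proof. by elim: n m => [|n IH] m //=; rewrite -IH. Qed.

Lemma last_iota m n : last m (iota m.+1 n) = (m + n)%N.
Proof. by elim: n m => [|n IH] m /=; rewrite ?addn0 // IH addSnnS. Qed.

Lemma is_partition_grid s t N : s < t -> (0 < N)%N ->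
  is_partition s t (grid_partition s t N).
Proof.
move=> st N0; rewrite /is_partition /grid_partition -{1 3}(grid0 s t N).
split; last by rewrite last_map last_iota grid_last.
have grid_lt i : grid s t N i < grid s t N i.+1.
  by rewrite -subr_gt0 grid_step divr_gt0 ?subr_gt0 ?ltr0n.
have path_grid n m : path <%R (grid s t N m) (map (grid s t N) (iota m.+1 n)).
  by elim: n m => [|n IH] m //=; rewrite grid_lt IH.
exact: path_grid.
Qed.

Lemma zip_grid_partition s t N :
  zip (s :: grid_partition s t N) (grid_partition s t N) =
  map (fun i => (grid s t N i, grid s t N i.+1)) (iota 0 N).
Proof. by rewrite -{1}(grid0 s t N) zip_map_iota. Qed.

Lemma riemann_sum_grid (A : R -> V -> V) (x : R -> V) s t N :
  riemann_sum A x s (grid_partition s t N) =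
  \sum_(0 <= i < N) incr A (grid s t N i) (grid s t N i.+1) (x (grid s t N i)).
Proof. by rewrite /riemann_sum zip_grid_partition big_map /index_iota subn0. Qed.

Lemma mesh_grid_lt s t N d : 0 < d -> (t - s) / N%:R < d ->
  mesh s (grid_partition s t N) < d.
Proof.
move=> d0 step_d; apply/mesh_ltP => // ab.
by rewrite zip_grid_partition => /mapP[i _ ->] /=; rewrite grid_step.
Qed.

Lemma exists_partition_mesh_lt s t d : s <= t -> 0 < d ->
  exists2 p, is_partition s t p & mesh s p < d.
Proof.
rewrite le_eqVlt => /orP[/eqP <- | st] d0.
  by exists [::]; [split | rewrite /mesh big_nil].
have [n step_d] := exists_div_exp2_lt (t - s) d0.
exists (grid_partition s t (2 ^ n)); last exact: mesh_grid_lt.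
by apply: is_partition_grid; rewrite ?expn_gt0.
Qed.

End Partitions.

Section YoungIntegral.
Variables (R : realType) (V : normedModType R) (A : R -> V -> V) (x : R -> V).

Lemma young_integral_is_point s I : young_integral_is A x s s I -> I = 0.
Proof.
move=> HI; have [// | I0] := eqVneq I 0.
have := HI `|I|; rewrite normr_gt0 => /(_ I0) [d [d0 Hd]].
have nil_part : is_partition s s [::] by [].
have := Hd [::] nil_part.
by rewrite /mesh /riemann_sum !big_nil sub0r normrN ltxx => /(_ d0).
Qed.

Lemma young_integral_is_sub (T : R) (x0 : V) :
  (forall t, 0 <= t -> t <= T -> young_integral_is A x 0 t (x t - x0)) ->
  forall s t, 0 <= s -> s <= t -> t <= T -> young_integral_is A x s t (x t - x s).
Proof.
move=> HY s t s0 st tT e e0.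
have e20 : 0 < e / 2 by rewrite divr_gt0.
have [d1 [d10 Hd1]] := HY t (le_trans s0 st) tT _ e20.
have [d2 [d20 Hd2]] := HY s s0 (le_trans st tT) _ e20.
have d0 : 0 < Num.min d1 d2 by rewrite lt_min d10 d20.
exists (Num.min d1 d2); split => // p2 part2; rewrite lt_min => /andP[mesh21 _].
have [p1 part1] := exists_partition_mesh_lt s0 d0.
rewrite lt_min => /andP[mesh11 mesh12].
have last1 : last 0 p1 = s by case: part1.
have part := is_partition_cat part1 part2.
have mesh1 : mesh 0 (p1 ++ p2) < d1 by apply: mesh_cat_lt; rewrite ?last1.
have := ltrD (Hd1 _ part mesh1) (Hd2 _ part1 mesh12).
rewrite -splitr; apply: le_lt_trans; apply: le_trans (ler_normB _ _).
rewrite riemann_sum_cat last1 [riemann_sum _ _ _ p1 + _]addrC addrAC addrKA opprK.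
by rewrite -addrA !opprB [_ + (x s - _)]addrC subrKA addrC.
Qed.

End YoungIntegral.

Section Sewing.
Variables (R : realType) (V : normedModType R) (A : R -> V -> V) (x : R -> V).
Variables (alpha beta T a K h : R).
Hypothesis A_hoelder : forall s t, 0 <= s -> s < t -> t <= T -> forall v y,
  `|incr A s t v - incr A s t y| <= a * (t - s) `^ alpha * `|v - y| `^ beta.
Hypothesis x_hoelder : local_hoelder alpha T h K x.
Hypotheses (a0 : 0 <= a) (K0 : 0 <= K) (beta0 : 0 < beta) (beta1 : beta <= 1).
Let theta := alpha * (1 + beta).

Lemma midpoint_defect_le p q r : 0 <= p -> p < q -> q < r -> r <= T ->
  q - p = r - q -> r - p <= h ->
  `|incr A p q (x p) + incr A q r (x q) - incr A p r (x p)|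
    <= a * (1 + K) * (q - p) `^ theta.
Proof.
move=> p0 pq qr rT mid rh.
have -> : incr A p q (x p) + incr A q r (x q) - incr A p r (x p) =
          incr A q r (x q) - incr A q r (x p).
  rewrite /incr [A q (x p) - _ + _]addrC -addrA; congr (_ + _).
  by rewrite !opprB subrKA.
apply: le_trans (A_hoelder _ qr rT _ _) _; first exact: le_trans (ltW pq).
have xq_xp : `|x q - x p| `^ beta <= (1 + K) * (q - p) `^ (alpha * beta).
  have qp_h : q - p <= h by apply: le_trans rh; rewrite lerD2r (ltW qr).
  have xqp := x_hoelder p0 pq (le_trans (ltW qr) rT) qp_h.
  apply: le_trans (ge0_ler_powR (ltW beta0) _ _ xqp) _;
    rewrite ?nnegrE ?mulr_ge0 ?powR_ge0 //.
  rewrite powRM ?powR_ge0 // -powRrM ler_wpM2r ?powR_ge0 //.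
  exact: powR_le_add1 (ltW beta0) beta1.
have -> : a * (1 + K) * (q - p) `^ theta =
          a * (q - p) `^ alpha * ((1 + K) * (q - p) `^ (alpha * beta)).
  rewrite /theta [alpha * (1 + _)]mulrDr mulr1 powRD; first ring.
  by rewrite subr_eq0 (gt_eqF pq) implybT.
by rewrite -mid ler_wpM2l ?mulr_ge0 ?powR_ge0.
Qed.

Variables (s t : R).
Hypotheses (s0 : 0 <= s) (st : s < t) (tT : t <= T) (ts_h : t - s <= h).

Let D n := riemann_sum A x s (grid_partition s t (2 ^ n)).

(* Halving each cell of the 2^n-grid changes the sum by 2^n midpoint defects. *)
Lemma dyadic_sum_step n :
  `|D n.+1 - D n| <= a * (1 + K) * ((t - s) / 2) `^ theta * (2 / 2 `^ theta) ^+ n.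
Proof.
have N0 : (0 < 2 ^ n)%N by rewrite expn_gt0.
rewrite /D !riemann_sum_grid expnS sumr_nat_pairs -sumrB.
apply: le_trans (ler_norm_sum _ _ _) _.
have w0 : 0 <= t - s by rewrite subr_ge0 (ltW st).
rewrite -mulrA -dyadic_powR // mulrCA mulr_natl.
rewrite -[X in _ *+ X](subn0 (2 ^ n)%N) -sumr_const_nat.
apply: ler_sum_nat => i /andP[_ i_lt].
set g := grid s t (2 * 2 ^ n).
have g_even j : g (2 * j)%N = grid s t (2 ^ n) j by exact: grid_double.
have g_step j : g j.+1 - g j = (t - s) / (2 ^ n.+1)%:R by rewrite grid_step expnS.
have g_lt j : g j < g j.+1.
  by rewrite -subr_gt0 g_step divr_gt0 ?subr_gt0 ?ltr0n ?expn_gt0.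
have p_ge := grid_ge (2 ^ n) i (ltW st).
have r_le := grid_le (ltW st) N0 i_lt.
have double_succ : (2 * i.+1)%N = (2 * i).+2 by rewrite mulnS.
rewrite -double_succ -(g_step (2 * i)%N) !g_even; apply: midpoint_defect_le.
- exact: le_trans s0 p_ge.
- by rewrite -g_even g_lt.
- by rewrite -g_even double_succ g_lt.
- exact: le_trans r_le tT.
- by rewrite -!g_even double_succ !g_step.
- by apply: le_trans ts_h; apply: lerB.
Qed.

Hypothesis theta1 : 1 < theta.

Lemma dyadic_sum_le n :
  `|D n - incr A s t (x s)| <= sewing_const theta * (a * (1 + K)) * (t - s) `^ theta.
Proof.
have w0 : 0 <= t - s by rewrite subr_ge0 (ltW st).
have p2 : 0 < 2 `^ theta by rewrite powR_gt0.
have q0 : 0 < 2 / 2 `^ theta by rewrite divr_gt0.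
have q_lt1 : 2 / 2 `^ theta < 1 by rewrite ltr_pdivrMr // mul1r pow2_gt2.
have q1 : `|2 / 2 `^ theta| < 1 by rewrite ger0_norm ?(ltW q0).
have D0 : D 0 = incr A s t (x s).
  by rewrite /D riemann_sum_grid expn0 big_nat1 grid0 grid_last.
rewrite -D0 -telescope_sumr //; apply: le_trans (ler_norm_sum _ _ _) _.
apply: le_trans (ler_sum_nat (fun k _ => dyadic_sum_step k)) _.
apply: le_trans (geometric_le_lim n _ q0 q1) _.
  by rewrite !mulr_ge0 ?powR_ge0 ?addr_ge0.
have c1_ge0 : 0 <= sewing_const theta by exact/ltW/sewing_const_gt0.
rewrite mulrC mulrA -/(sewing_const theta) ler_wpM2l ?mulr_ge0 ?addr_ge0 //.
apply: ge0_ler_powR; rewrite ?nnegrE ?divr_ge0 //; last lra.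
exact: le_trans ler01 (ltW theta1).
Qed.

Hypothesis x_integral : young_integral_is A x s t (x t - x s).

Lemma sewing_le :
  `|x t - x s - incr A s t (x s)| <=
  sewing_const theta * (a * (1 + K)) * (t - s) `^ theta.
Proof.
apply/ler_addgt0Pr => e e0.
have [d [d0 Hd]] := x_integral e0.
have [n step_d] := exists_div_exp2_lt (t - s) d0.
have part := is_partition_grid st (expn_gt0 2 n).
have close := Hd _ part (mesh_grid_lt d0 step_d).
have -> : x t - x s - incr A s t (x s) =
          (D n - incr A s t (x s)) - (D n - (x t - x s)).
  by rewrite (opprB (D n)) [RHS]addrC subrKA.
by apply: le_trans (ler_normB _ _) _; rewrite lerD ?dyadic_sum_le ?(ltW close).
Qed.

End Sewing.

Section Bootstrap.
Variables (R : realType) (V : normedModType R) (A : R -> V -> V) (x : R -> V).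
Variables (alpha beta T a h : R).
Hypothesis A_hoelder : forall s t, 0 <= s -> s < t -> t <= T -> forall v y,
  `|incr A s t v - incr A s t y| <= a * (t - s) `^ alpha * `|v - y| `^ beta.
Hypothesis A_bounded : forall s t, 0 <= s -> s < t -> t <= T -> forall v,
  `|incr A s t v| <= a * (t - s) `^ alpha.
Hypothesis x_integral : forall s t, 0 <= s -> s <= t -> t <= T ->
  young_integral_is A x s t (x t - x s).
Hypotheses (a0 : 0 <= a) (alpha0 : 0 < alpha) (beta0 : 0 < beta) (beta1 : beta <= 1).
Hypothesis theta1 : 1 < alpha * (1 + beta).
Hypothesis h_small :
  sewing_const (alpha * (1 + beta)) * a * h `^ (alpha * beta) <= 2^-1.

Lemma local_hoelder_improve K : 0 <= K -> local_hoelder alpha T h K x ->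
  local_hoelder alpha T h (a + (1 + K) / 2) x.
Proof.
move=> K0 x_hoelder s t s0 st tT ts_h.
have sew := sewing_le A_hoelder x_hoelder a0 K0 beta0 beta1 s0 st tT ts_h theta1
  (x_integral s0 (ltW st) tT).
have -> : x t - x s = incr A s t (x s) + (x t - x s - incr A s t (x s)).
  by rewrite [RHS]addrC subrK.
rewrite mulrDl; apply: le_trans (ler_normD _ _) (lerD (A_bounded s0 st tT _) _).
apply: le_trans sew _.
set c := sewing_const (alpha * (1 + beta)).
have c0 : 0 < c := sewing_const_gt0 theta1.
have w0 : 0 < t - s by rewrite subr_gt0.
have h0 : 0 <= h by apply: le_trans ts_h; apply: ltW.
have theta_split :
    (t - s) `^ (alpha * (1 + beta)) <= (t - s) `^ alpha * h `^ (alpha * beta).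
  rewrite mulrDr mulr1 powRD ?(gt_eqF w0) ?implybT // ler_wpM2l ?powR_ge0 //.
  by apply: ge0_ler_powR; rewrite ?nnegrE ?(ltW w0) ?(ltW (mulr_gt0 alpha0 beta0)).
apply: le_trans (ler_wpM2l _ theta_split) _.
  by rewrite !mulr_ge0 ?addr_ge0 ?(ltW c0).
have -> : c * (a * (1 + K)) * ((t - s) `^ alpha * h `^ (alpha * beta)) =
          (1 + K) * (t - s) `^ alpha * (c * a * h `^ (alpha * beta)) by ring.
by rewrite mulrAC ler_wpM2r ?powR_ge0 // ler_wpM2l ?addr_ge0.
Qed.

Lemma local_hoelder_iterate M n : 0 <= M -> local_hoelder alpha T h M x ->
  local_hoelder alpha T h (2 * a + 1 + M / (2 ^ n)%:R) x.
Proof.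
move=> M0 xM; elim: n => [|n IH].
  by apply: local_hoelder_le xM => //; rewrite expn0 divr1 lerDr addr_ge0 ?mulr_ge0.
have Kn0 : 0 <= 2 * a + 1 + M / (2 ^ n)%:R by rewrite !addr_ge0 ?mulr_ge0 ?divr_ge0.
have -> : 2 * a + 1 + M / (2 ^ n.+1)%:R = a + (1 + (2 * a + 1 + M / (2 ^ n)%:R)) / 2.
  by rewrite expnS natrM; field; rewrite pnatr_eq0 expn_eq0.
exact: local_hoelder_improve Kn0 IH.
Qed.

Lemma local_hoelder_bootstrap M : 0 <= M -> local_hoelder alpha T h M x ->
  local_hoelder alpha T h (2 * a + 1) x.
Proof.
move=> M0 xM s t s0 st tT ts_h.
apply: (@le_add_div_exp2 _ _ _ (M * (t - s) `^ alpha)) => n.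
have := local_hoelder_iterate n M0 xM s0 st tT ts_h.
by move/le_trans; apply; rewrite mulrDl mulrAC.
Qed.

End Bootstrap.

Section Chaining.
Variables (R : realType) (V : normedModType R) (x : R -> V) (alpha T h K : R).
Hypotheses (alpha1 : alpha < 1) (K0 : 0 <= K).
Hypotheses (h0 : 0 < h) (hT : h <= T).
Hypothesis x_hoelder : local_hoelder alpha T h K x.

Lemma local_hoelder_chain s t N : 0 <= s -> s < t -> t <= T -> (0 < N)%N ->
  (t - s) / N%:R <= h -> `|x t - x s| <= K * N%:R `^ (1 - alpha) * (t - s) `^ alpha.
Proof.
move=> s0 st tT N0 step_h; have w0 : 0 <= t - s by rewrite subr_ge0 (ltW st).
have telescope : \sum_(0 <= i < N) (x (grid s t N i.+1) - x (grid s t N i)) = x t - x s.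
  by rewrite telescope_sumr // grid0 grid_last.
rewrite -telescope; apply: le_trans (ler_norm_sum _ _ _) _.
apply: le_trans (ler_sum_nat (G := fun=> K * ((t - s) / N%:R) `^ alpha) _) _.
  move=> i /andP[_ i_lt]; rewrite -(grid_step s t N i); apply: x_hoelder.
  - exact: le_trans s0 (grid_ge _ _ (ltW st)).
  - by rewrite -subr_gt0 grid_step divr_gt0 ?subr_gt0 ?ltr0n.
  - exact: le_trans (grid_le (ltW st) N0 i_lt) tT.
  - by rewrite grid_step.
rewrite sumr_const_nat subn0 -[_ *+ N]mulr_natl mulrCA mul_powR_div ?ltr0n //.
by rewrite mulrA.
Qed.

Lemma local_hoelder_global :
  local_hoelder alpha T T (K * (2 * T / h) `^ (1 - alpha)) x.
Proof.
apply/local_hoelderT => s t s0 st tT.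
have w_h : 0 <= (t - s) / h by rewrite divr_ge0 ?subr_ge0 ?(ltW st) ?(ltW h0).
pose N := (Num.truncn ((t - s) / h)).+1.
have step_h : (t - s) / N%:R <= h.
  rewrite ler_pdivrMr ?ltr0n // mulrC -ler_pdivrMr //; exact/ltW/truncnS_gt.
have N_le : N%:R <= 2 * T / h.
  have : (Num.truncn ((t - s) / h))%:R <= (t - s) / h by rewrite truncn_le.
  have : (t - s) / h <= T / h by rewrite ler_pM2r ?invr_gt0 //; lra.
  have : 1 <= T / h by rewrite ler_pdivlMr // mul1r.
  rewrite /N -natr1 -mulrA; lra.
apply: le_trans (local_hoelder_chain s0 st tT (ltn0Sn _) step_h) _.
rewrite ler_wpM2r ?powR_ge0 // ler_wpM2l //.
have Th0 : 0 <= 2 * T / h := le_trans (ler0n _ N) N_le.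
by apply: ge0_ler_powR; rewrite ?nnegrE ?subr_ge0 ?(ltW alpha1).
Qed.

End Chaining.

Section Constants.
Variable R : realType.

Lemma exists_sewing_scale (T c rho gamma : R) :
  0 < T -> 0 < rho -> 0 <= gamma -> gamma <= 1 -> gamma <= rho -> 0 <= c ->
  exists h, [/\ 0 < h, h <= T, c * h `^ rho <= 2^-1 &
    (2 * T / h) `^ gamma <= 2 + 2 * T `^ gamma * (2 * c + 1)].
Proof.
move=> T0 rho0 gamma0 gamma1 gamma_rho c0.
set L := 2 * c + 1; have L1 : 1 <= L by rewrite lerDr mulr_ge0.
have L0 : 0 < L := lt_le_trans ltr01 L1.
set m := L `^ (- rho^-1); have m0 : 0 < m by rewrite powR_gt0.
have m_rho : m `^ rho = L^-1.
  by rewrite -powRrM mulNr mulVf ?gt_eqF // powR_inv1 // (ltW L0).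
exists (Num.min T m); split.
- by rewrite lt_min T0 m0.
- by rewrite ge_min lexx.
- apply: (@le_trans _ _ (c * m `^ rho)).
    rewrite ler_wpM2l // ge0_ler_powR ?nnegrE ?(ltW rho0) ?(ltW m0) //.
      by rewrite le_min (ltW T0) (ltW m0).
    by rewrite ge_min lexx orbT.
  by rewrite m_rho -/(c / L) ler_pdivrMr // /L; lra.
have pow2 : 2 `^ gamma <= 2 by rewrite ler1_powR ?ler1n.
have TL0 : 0 <= T `^ gamma * L by rewrite mulr_ge0 ?powR_ge0 ?(ltW L0).
case: (leP T m) => [Tm | mT].
  rewrite mulfK ?gt_eqF //; apply: le_trans pow2 _.
  by rewrite lerDl -mulrA mulr_ge0.
rewrite /m powRN invrK powRM ?mulr_ge0 ?powR_ge0 ?(ltW T0) //.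
rewrite powRM ?(ltW T0) // -powRrM.
have L_pow : L `^ (rho^-1 * gamma) <= L.
  by rewrite ler1_powR // mulrC ler_pdivrMr // mul1r.
apply: (@le_trans _ _ (2 * (T `^ gamma * L))); last by rewrite mulrA lerDr.
rewrite -mulrA; apply: ler_pM => //; first by rewrite mulr_ge0 ?powR_ge0.
by rewrite ler_wpM2l ?powR_ge0.
Qed.

Definition hoelder_const (alpha beta T : R) :=
  2 * (2 + 2 * T `^ (1 - alpha)) +
  12 * T `^ (1 - alpha) * sewing_const (alpha * (1 + beta)).

Lemma hoelder_const_le (a c T' : R) : 0 <= a -> 0 <= c -> 0 <= T' ->
  (2 * a + 1) * (2 + 2 * T' * (2 * (c * a) + 1)) <=
  (2 * (2 + 2 * T') + 12 * T' * c) * (1 + a ^+ 2).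
Proof.
move=> a0 c0 T'0; set P := 2 + 2 * T'; set Q := 4 * T' * c.
have P0 : 0 <= P by rewrite addr_ge0 ?mulr_ge0.
have Q0 : 0 <= Q by rewrite !mulr_ge0.
have h1 : 0 <= P * ((a - 1) ^+ 2 + a ^+ 2) by rewrite mulr_ge0 // addr_ge0 ?sqr_ge0.
have h2 : 0 <= Q * ((a - 1) ^+ 2 + a + 2) by rewrite mulr_ge0 // !addr_ge0 ?sqr_ge0.
have -> : (2 * a + 1) * (2 + 2 * T' * (2 * (c * a) + 1)) = (2 * a + 1) * (P + Q * a).
  by rewrite /P /Q; ring.
have -> : 12 * T' * c = 3 * Q by rewrite /Q; ring.
nra.
Qed.

End Constants.

Lemma young_solution_hoelder (R : realType) (V : normedModType R)
    (alpha beta T a : R) (A : R -> V -> V) (x0 : V) (x : R -> V) :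
  0 < T -> 0 < alpha -> alpha < 1 -> 0 < beta -> beta <= 1 ->
  1 < alpha * (1 + beta) ->
  field_norm alpha beta T A = a%:E -> (hoelder_norm alpha T x < +oo)%E ->
  (forall t, 0 <= t -> t <= T -> young_integral_is A x 0 t (x t - x0)) ->
  local_hoelder alpha T T (hoelder_const alpha beta T * (1 + a ^+ 2)) x.
Proof.
move=> T0 alpha0 alpha1 beta0 beta1 theta1 Ha x_fin x_eq.
have a0 := field_norm_ge0 Ha T0.
have c0 := sewing_const_gt0 theta1.
have [M M0 xM] := hoelder_norm_fin_local_hoelder T0 x_fin.
have gamma0 : 0 <= 1 - alpha by rewrite subr_ge0 (ltW alpha1).
have gamma1 : 1 - alpha <= 1 by rewrite lerBlDr lerDl (ltW alpha0).
have gamma_rho : 1 - alpha <= alpha * beta by move: theta1; rewrite mulrDr mulr1; lra.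
have [h [h0 hT h_small scale]] := exists_sewing_scale T0 (mulr_gt0 alpha0 beta0)
  gamma0 gamma1 gamma_rho (mulr_ge0 (ltW c0) a0).
have x_loc := local_hoelder_bootstrap (incr_hoelder Ha) (incr_norm_le Ha)
  (young_integral_is_sub x_eq) a0 alpha0 beta0 beta1 theta1 h_small M0
  (local_hoelder_le hT (lexx M) xM).
have K0 : 0 <= 2 * a + 1 by rewrite addr_ge0 ?mulr_ge0.
apply: local_hoelder_le (local_hoelder_global alpha1 K0 h0 hT x_loc) => //.
apply: le_trans (ler_wpM2l K0 scale) _.
by apply: hoelder_const_le => //; [exact: ltW | exact: powR_ge0].
Qed.

Theorem mainTheorem11 (R : realType) (alpha beta T : R) :
  0 < T -> 1 / 2 < alpha -> alpha < 1 -> 0 < beta -> beta < 1 ->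
  1 < alpha * (1 + beta) ->
  exists C : R,
  forall (V : completeNormedModType R) (A : R -> V -> V) (x0 : V) (x : R -> V)
         (a : R),
    separable V ->
    (forall v : V, A 0 v = 0) ->
    field_norm alpha beta T A = a%:E ->
    (hoelder_norm alpha T x < +oo)%E ->
    (forall t : R, 0 <= t -> t <= T -> young_integral_is A x 0 t (x t - x0)) ->
    (hoelder_semi alpha T x <= (C * (1 + a ^+ 2))%:E)%E /\
    (hoelder_norm alpha T x <= (C * (1 + `|x0| + a ^+ 2))%:E)%E.
Proof.
move=> T0 alpha_half alpha1 beta0 beta1 theta1.
have alpha0 : 0 < alpha by apply: lt_trans alpha_half; rewrite divr_gt0.
set C0 := hoelder_const alpha beta T.
have C0_ge0 : 0 <= C0.
  have := sewing_const_gt0 theta1; have := powR_ge0 T (1 - alpha).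
  rewrite /C0 /hoelder_const; nra.
have Ta0 : 0 <= T `^ alpha by rewrite powR_ge0.
(* Neither separability nor A(0, .) = 0 is needed, and alpha > 0 suffices. *)
exists (C0 * (1 + T `^ alpha) + 1) => V A x0 x a _ _ Ha x_fin x_eq.
have x_hoelder := young_solution_hoelder T0 alpha0 alpha1 beta0 (ltW beta1) theta1
  Ha x_fin x_eq; rewrite -/C0 in x_hoelder.
have a2 : 0 <= a ^+ 2 := sqr_ge0 a.
have K0 := mulr_ge0 C0_ge0 (addr_ge0 ler01 a2).
have x00 : x 0 = x0.
  by apply/eqP; rewrite -subr_eq0; apply/eqP/young_integral_is_point/x_eq/ltW.
have x_sup := norm_le_local_hoelder K0 alpha0 x_hoelder; rewrite x00 in x_sup.
have C0T := mulr_ge0 C0_ge0 Ta0.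
split; first by apply: le_trans (hoelder_semi_le x_hoelder) _; rewrite lee_fin; nra.
apply: le_trans (leeD (sup_norm_le x_sup) (hoelder_semi_le x_hoelder)) _.
have := mulr_ge0 (addr_ge0 C0_ge0 C0T) (normr_ge0 x0).
by rewrite -EFinD lee_fin; nra.
Qed.
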